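(* Let $E$ be a (Hausdorff, real) topological vector space. The following are equivalent: (i) $E$ contains the topological vector space $\mathbb{R}^{(\mathbb{N})}$ as a (topologically isomorphic) subspace; (ii) $E$ contains the topological group $\mathbb{Z}^{(\mathbb{N})}$ as a (topologically isomorphic) subgroup; (iii) $E$ has an infinite absolutely Cauchy summable subset. Moreover, if $E$ is complete, these three conditions are also equivalent to: (iv) $E$ contains the topological vector space $\mathbb{R}^{\mathbb{N}}$ as a (topologically isomorphic) subspace.
   Context: $\mathbb{R}^{\mathbb{N}}$ and $\mathbb{Z}^{\mathbb{N}}$ carry the Tychonoff product topology ($\mathbb{Z}$ discrete), and $\mathbb{R}^{(\mathbb{N})}$, $\mathbb{Z}^{(\mathbb{N})}$ denote the subsets of finitely supported sequences, with the subspace topology of the product. A subset $A$ of $E$ (viewed as an abelian topological group) is absolutely Cauchy summable if for every neighbourhood $U$ of $0$ there is a finite $F\subseteq A$ such that the additive subgroup generated by $A\setminus F$ is contained in $U$. *)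

From HB Require Import structures.
From mathcomp Require Import all_boot all_order all_algebra.
From mathcomp Require Import all_classical all_reals all_analysis.
Set Implicit Arguments. Unset Strict Implicit. Unset Printing Implicit Defensive.
Import Order.TTheory GRing.Theory Num.Theory.
Import numFieldTopology.Exports.
Local Open Scope classical_set_scope.
Local Open Scope ring_scope.

(* Topological vector spaces over R are [topologicalLmodType R]:
   an R-module with a topology making addition, opposite and scaling
   (R carrying its usual topology) continuous. *)

Definition fin_supp {T : zmodType} (x : nat -> T) : Prop :=
  finite_set [set i | x i != 0].

(* f restricted to A is a topological embedding (homeomorphism of A,
   with the subspace topology, onto f @` A, with the subspace topology) *)
Definition embedding_on {X Y : topologicalType} (A : set X) (f : X -> Y) : Prop :=
  [/\ {in A &, injective f},
      (forall x, A x -> forall V, nbhs (f x) V ->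
         exists U, nbhs x U /\ forall y, A y -> U y -> V (f y))
    & (* f^-1 : f @` A -> A continuous (subspace topologies) *)
      (forall x, A x -> forall U, nbhs x U ->
         exists V, nbhs (f x) V /\ forall y, A y -> V (f y) -> U y)].

Notation RN R := {ptws nat -> R}.
Notation ZN := {ptws nat -> discrete_topology int}.

Definition contains_RfinN (R : realType) (E : topologicalLmodType R) : Prop :=
  exists f : RN R -> E,
    (forall (a : R) (x y : RN R), fin_supp (x : nat -> R) -> fin_supp (y : nat -> R) ->
       f (fun i => a * x i + y i) = a *: f x + f y)
    /\ embedding_on (fun x : RN R => fin_supp (x : nat -> R)) f.

Definition contains_ZfinN (R : realType) (E : topologicalLmodType R) : Prop :=
  exists f : ZN -> E,
    (forall x y : ZN, fin_supp (x : nat -> int) -> fin_supp (y : nat -> int) ->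
       f (fun i => (x i : int) + (y i : int)) = f x + f y)
    /\ embedding_on (fun x : ZN => fin_supp (x : nat -> int)) f.

Definition contains_RN (R : realType) (E : topologicalLmodType R) : Prop :=
  exists f : RN R -> E,
    (forall (a : R) (x y : RN R), f (fun i => a * x i + y i) = a *: f x + f y)
    /\ embedding_on [set: RN R] f.

Definition is_add_subgroup {G : zmodType} (H : set G) : Prop :=
  H 0 /\ forall x y, H x -> H y -> H (x - y).

Definition gen_add_subgroup {G : zmodType} (B : set G) : set G :=
  \bigcap_(H in [set H : set G | is_add_subgroup H /\ B `<=` H]) H.

Definition abs_cauchy_summable {G : topologicalZmodType} (A : set G) : Prop :=
  forall U : set G, nbhs (0 : G) U ->
    exists F : set G, [/\ finite_set F, F `<=` A & gen_add_subgroup (A `\` F) `<=` U].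

Definition has_inf_acs_subset (R : realType) (E : topologicalLmodType R) : Prop :=
  exists A : set E, infinite_set A /\ abs_cauchy_summable A.

(* completeness of a topological vector space (w.r.t. its canonical
   translation-invariant uniformity): every Cauchy filter converges *)
Definition tvs_complete (R : realType) (E : topologicalLmodType R) : Prop :=
  forall F : set_system E, ProperFilter F ->
    (forall U : set E, nbhs (0 : E) U ->
       exists2 B, F B & forall x y, B x -> B y -> U (x - y)) ->
    exists x : E, F --> x.

From HB Require Import structures.
From mathcomp Require Import all_boot all_order all_algebra.
From mathcomp Require Import all_classical all_reals all_analysis.
From mathcomp Require Import lra.
Set Implicit Arguments. Unset Strict Implicit. Unset Printing Implicit Defensive.
Import Order.TTheory GRing.Theory Num.Theory.
Import numFieldTopology.Exports.
Local Open Scope classical_set_scope.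
Local Open Scope ring_scope.

(* From an infinite absolutely Cauchy summable set [A] one extracts distinct
   points [a_n] of [A] and balanced neighbourhoods [W_n] of 0 such that
   [a_n] is not in [W_n + W_n], every real combination of the [a_i], [i > n],
   lies in [W_n], and every combination of the [a_i], [i >= k], is small for
   [k] large.  The last property holds because the real span of [A] minus a
   finite set is small: a real combination is [1/M] times an integer one plus
   a combination with small coefficients.  Then [x |-> sum_i x_i a_i] is a
   linear embedding of R^(N), and of R^N when the series converge (that is,
   when [E] is complete): [W_n] separates [a_n] from the other terms, so the
   coefficients depend continuously on the sum.  Restricting to integer
   sequences gives Z^(N), and the images of the unit vectors of Z^(N) form an
   infinite absolutely Cauchy summable set. *)

Section TopologicalModule.
Variables (R : realType) (E : topologicalLmodType R).
Implicit Types (U V : set E).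

Lemma nbhs0_add_split U : nbhs (0 : E) U ->
  exists V, nbhs (0 : E) V /\ forall x y, V x -> V y -> U (x + y).
Proof.
move=> U0; have := @add_continuous E (0, 0) U; rewrite /= addr0 => /(_ U0).
move=> [[P Q] [/= P0 Q0] PQU].
exists (P `&` Q); split; first exact: filterI.
by move=> x y [Px _] [_ Qy]; apply: (PQU (x, y)).
Qed.

Lemma nbhs0_scale (c : R) U : nbhs (0 : E) U -> nbhs (0 : E) [set x | U (c *: x)].
Proof.
move=> U0; have := @scale_continuous R E (c, 0) U; rewrite /= scaler0 => /(_ U0).
move=> [[P Q] [/= Pc Q0] PQU].
apply: filterS Q0 => x Qx; apply: (PQU (c, x)); split => //.
exact: nbhs_singleton Pc.
Qed.

Lemma nbhs0_scale_small (b : E) U : nbhs (0 : E) U ->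
  exists2 d : R, 0 < d & forall r : R, `|r| < d -> U (r *: b).
Proof.
move=> U0; have := @scale_continuous R E (0, b) U; rewrite /= scale0r => /(_ U0).
move=> [[P Q] [/= /nbhs_ballP [d /= d0 dP] Qb] PQU].
exists d => // r rd; apply: (PQU (r, b)); split => /=.
  by apply: dP; rewrite /ball /= sub0r normrN.
exact: nbhs_singleton Qb.
Qed.

Definition balanced U := forall x (r : R), U x -> `|r| <= 1 -> U (r *: x).

Definition balanced_core U := [set x : E | forall r : R, `|r| <= 1 -> U (r *: x)].

Lemma nbhs0_balanced_core U : nbhs (0 : E) U -> nbhs (0 : E) (balanced_core U).
Proof.
move=> U0; have := @scale_continuous R E (0, 0) U; rewrite /= scaler0 => /(_ U0).
move=> [[P Q] [/= /nbhs_ballP [d /= d0 dP] Q0] PQU].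
have d2 : 0 < d / 2 by rewrite divr_gt0.
apply: filterS (nbhs0_scale (d / 2)^-1 Q0) => x Qx r r1.
have -> : r *: x = (r * (d / 2)) *: ((d / 2)^-1 *: x).
  by rewrite scalerA -mulrA divff ?mulr1 // gt_eqF.
apply: (PQU (_, _)); split => //=; apply: dP.
rewrite /ball /= sub0r normrN normrM [`|d / 2|]ger0_norm ?ltW //.
have := normr_ge0 r; nra.
Qed.

Lemma balanced_core_sub U : balanced_core U `<=` U.
Proof. by move=> x /(_ 1); rewrite normr1 scale1r; apply. Qed.

Lemma balanced_coreP U : balanced (balanced_core U).
Proof.
by move=> x r Ux r1 s s1; rewrite scalerA; apply: Ux; rewrite normrM mulr_ile1.
Qed.

Lemma balanced_coreN U x : balanced_core U x -> balanced_core U (- x).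
Proof. by move=> Ux; rewrite -scaleN1r; apply: balanced_coreP; rewrite ?normrN ?normr1. Qed.

Lemma nbhs0_shift (p : E) U : nbhs p U -> nbhs (0 : E) [set v | U (p + v)].
Proof.
move=> Up; have := @add_continuous E (p, 0) U; rewrite /= addr0 => /(_ Up).
move=> [[P Q] [/= Pp Q0] PQU].
apply: filterS Q0 => v Qv; apply: (PQU (p, v)); split => //.
exact: nbhs_singleton Pp.
Qed.

Lemma nbhs_subr (x : E) V : nbhs (0 : E) V -> nbhs x [set z | V (z - x)].
Proof.
move=> V0; have := @add_continuous E (x, - x) V; rewrite /= subrr => /(_ V0).
move=> [[P Q] [/= Px Qx] PQV].
apply: filterS Px => z Pz; apply: (PQV (z, - x)); split => //.
exact: nbhs_singleton Qx.
Qed.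

Lemma nbhs_subl (x : E) V : nbhs (0 : E) V -> nbhs x [set z | V (x - z)].
Proof.
move=> V0; apply: filterS (nbhs_subr x (nbhs0_scale (-1) V0)) => z /=.
by rewrite scaleN1r opprB.
Qed.

Lemma hausdorff_nbhs0_notin (a : E) : hausdorff_space E -> a != 0 ->
  exists U, nbhs (0 : E) U /\ ~ U a.
Proof.
move=> /hausdorff_accessible /(_ 0 a); rewrite eq_sym => acc a0.
have [A [oA A0 Aa]] := acc a0.
exists A; split; first by apply: open_nbhs_nbhs; split => //; rewrite -inE.
by move: Aa; rewrite in_setC => /negP; rewrite inE.
Qed.

End TopologicalModule.

Section LinearCombination.
Variables (R : pzRingType) (E : lmodType R).
Implicit Types (c : nat -> R) (a : nat -> E).

Definition lincomb c a (N : nat) : E := \sum_(i < N) c i *: a i.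

Lemma eq_lincomb c1 c2 a N : (forall i, (i < N)%N -> c1 i = c2 i) ->
  lincomb c1 a N = lincomb c2 a N.
Proof. by move=> e; apply: eq_bigr => i _; rewrite e. Qed.

Lemma eq_lincomb_vec c a1 a2 N :
  (forall i, (i < N)%N -> c i != 0 -> a1 i = a2 i) -> lincomb c a1 N = lincomb c a2 N.
Proof.
move=> e; apply: eq_bigr => i _; have [->|ci] := eqVneq (c i) 0; last by rewrite e.
by rewrite !scale0r.
Qed.

Lemma lincomb0 c a N : (forall i, (i < N)%N -> c i = 0) -> lincomb c a N = 0.
Proof. by move=> c0; rewrite /lincomb big1 // => i _; rewrite c0 // scale0r. Qed.

Lemma lincombD c1 c2 a N :
  lincomb (fun i => c1 i + c2 i) a N = lincomb c1 a N + lincomb c2 a N.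
Proof. by rewrite /lincomb -big_split; apply: eq_bigr => i _; rewrite scalerDl. Qed.

Lemma lincombZ (k : R) c a N : lincomb (fun i => k * c i) a N = k *: lincomb c a N.
Proof. by rewrite /lincomb scaler_sumr; apply: eq_bigr => i _; rewrite scalerA. Qed.

Lemma lincombN c a N : lincomb (fun i => - c i) a N = - lincomb c a N.
Proof. by rewrite -scaleN1r -lincombZ; apply: eq_lincomb => i _; rewrite mulN1r. Qed.

Lemma lincomb_stable c a N M : (forall i, (N <= i)%N -> c i = 0) -> (N <= M)%N ->
  lincomb c a M = lincomb c a N.
Proof.
move=> c0; elim: M => [|M IH]; first by rewrite leqn0 => /eqP ->.
rewrite leq_eqVlt => /orP [/eqP <- //|]; rewrite ltnS => NM.
by rewrite -IH // /lincomb big_ord_recr /= c0 // scale0r addr0.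
Qed.

Lemma lincomb_trunc n c a N : (n <= N)%N ->
  lincomb (fun i => if (i < n)%N then c i else 0) a N = lincomb c a n.
Proof.
move=> nN; rewrite (@lincomb_stable _ a n) //; last first.
  by move=> i; rewrite leqNgt => /negbTE ->.
by apply: eq_lincomb => i ->.
Qed.

Lemma lincomb_split k c a N : lincomb c a N =
  lincomb (fun i => if (i < k)%N then c i else 0) a N +
  lincomb (fun i => if (i < k)%N then 0 else c i) a N.
Proof.
by rewrite -lincombD; apply: eq_lincomb => i _; case: ifP; rewrite ?addr0 ?add0r.
Qed.

Lemma lincomb_delta (x : R) a j N : (j < N)%N ->
  lincomb (fun i => if i == j then x else 0) a N = x *: a j.
Proof.
move=> jN; rewrite (@lincomb_stable _ _ j.+1) //; last first.
  by move=> i ji; case: eqP => // e; rewrite e ltnn in ji.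
rewrite /lincomb big_ord_recr /= eqxx big1 ?add0r // => i _.
by rewrite (ltn_eqF (ltn_ord i)) scale0r.
Qed.

Lemma lincomb_shift_index c a k N : (forall i, (i < k)%N -> c i = 0) ->
  lincomb c a N = lincomb c (fun i => a (maxn i k)) N.
Proof.
move=> ck; apply: eq_lincomb_vec => i _ ci; congr a; apply/esym/maxn_idPl.
by rewrite leqNgt; apply: contra ci => /ck ->.
Qed.

End LinearCombination.

Lemma injective_eventually_notin (T : eqType) (u : nat -> T) : injective u ->
  forall s : seq T, exists k, forall m, (k <= m)%N -> u m \notin s.
Proof.
move=> uinj; elim => [|x s [k IH]]; first by exists 0%N.
have [[m0 um0]|nx] := pselect (exists m0, u m0 = x); last first.
  exists k => m km; rewrite in_cons negb_or IH // andbT.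
  by apply/eqP => e; apply: nx; exists m.
exists (maxn k m0.+1) => m; rewrite geq_max => /andP [km m0m].
rewrite in_cons negb_or IH // andbT -um0; apply/eqP => /uinj e.
by rewrite e ltnn in m0m.
Qed.

Lemma injective_infinite_range (T : choiceType) (u : nat -> T) :
  injective u -> infinite_set (range u).
Proof.
move=> uinj /finite_seqP [s us]; have [k ks] := injective_eventually_notin uinj s.
have : [set` s] (u k) by rewrite -us; exists k.
by move=> /= ks_k; have := ks k (leqnn k); rewrite ks_k.
Qed.

Section FiniteSupport.
Variable T : zmodType.
Implicit Types x y : nat -> T.

Lemma fin_suppP x : fin_supp x <-> exists N, forall i, (N <= i)%N -> x i = 0.
Proof.
split=> [/finite_fsetP [B HB]|[N xN]].
  exists (\max_(i <- finmap.enum_fset B) i).+1 => i Ni.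
  apply/eqP; apply: contraT => xi.
  have : [set i | x i != 0] i by [].
  rewrite HB /= => iB; have := @leq_bigmax_seq _ _ xpredT id i iB erefl.
  by rewrite leqNgt Ni.
apply: (@sub_finite_set _ _ `I_N); last exact: finite_II.
move=> i /= xi; rewrite ltnNge; apply/negP => Ni.
by move: xi; rewrite xN // eqxx.
Qed.

Lemma fin_suppB x y : fin_supp x -> fin_supp y -> fin_supp (fun i => y i - x i).
Proof.
move=> /fin_suppP [Nx xN] /fin_suppP [Ny yN]; apply/fin_suppP; exists (maxn Nx Ny).
by move=> i; rewrite geq_max => /andP [/xN -> /yN ->]; rewrite subr0.
Qed.

End FiniteSupport.

Lemma fin_supp_intr (R : pzRingType) (z : nat -> int) :
  fin_supp z -> fin_supp (fun i => (z i)%:~R : R).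
Proof. by move=> /fin_suppP [N zN]; apply/fin_suppP; exists N => i /zN ->. Qed.

Lemma nbhs_ptws_box (T : topologicalType) (x : nat -> T) k (P : nat -> set T) :
  (forall i, nbhs (x i) (P i)) ->
  nbhs (x : {ptws nat -> T}) [set y : {ptws nat -> T} | forall i, (i < k)%N -> P i (y i)].
Proof.
move=> xP; elim: k => [|k IH]; first by apply: (@filterS _ _ _ setT) => //; apply: filterT.
have Pk : nbhs (x : {ptws nat -> T}) [set y : {ptws nat -> T} | P k (y k)].
  exact: (@proj_continuous nat (fun=> T) k x) (xP k).
apply: filterS (filterI IH Pk) => y [yP yk] i; rewrite ltnS leq_eqVlt.
by case/orP => [/eqP ->|]; [exact: yk|exact: yP].
Qed.

Section PointwiseBoxes.
Variable R : realType.

Definition real_box (x : nat -> R) k (d : R) : set (RN R) :=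
  [set y | forall i, (i < k)%N -> `|y i - x i| < d].

Definition int_box (x : nat -> int) k : set ZN :=
  [set y | forall i, (i < k)%N -> y i = x i].

Lemma nbhs_real_box (x : nat -> R) k (d : R) : 0 < d -> nbhs (x : RN R) (real_box x k d).
Proof.
move=> d0; have := nbhs_ptws_box k (fun i => nbhsx_ballx (x i) d d0).
by apply: filterS => y yx i ik; have := yx i ik; rewrite /ball /= distrC.
Qed.

Lemma nbhs_real_boxP (x : nat -> R) (U : set (RN R)) : nbhs (x : RN R) U ->
  exists k (d : R), 0 < d /\ real_box x k d `<=` U.
Proof.
pose G := [set U : set (RN R) | exists k (d : R), 0 < d /\ real_box x k d `<=` U].
have FG : Filter G.
  constructor; first by exists 0%N, 1.
    move=> A B [k1 [d1 [d10 A1]]] [k2 [d2 [d20 B2]]].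
    exists (maxn k1 k2), (Num.min d1 d2); split; first by rewrite lt_min d10.
    move=> y yx; split; [apply: A1|apply: B2] => i ik.
      by have := yx i (leq_trans ik (leq_maxl _ _)); rewrite lt_min => /andP [].
    by have := yx i (leq_trans ik (leq_maxr _ _)); rewrite lt_min => /andP [].
  by move=> A B AB [k [d [d0 A1]]]; exists k, d; split => // y /A1 /AB.
have Gx : {ptws, G --> x}.
  apply/(@pointwise_cvgP nat R _ x FG) => t A /nbhs_ballP [e /= e0 eA].
  by exists t.+1, e; split => // y yx; apply: eA; rewrite /ball /= distrC; apply: yx.
by move=> /Gx.
Qed.

Lemma nbhs_int_box (x : nat -> int) k : nbhs (x : ZN) (int_box x k).
Proof.
exact: (nbhs_ptws_box k (fun i => @discrete_set1 (discrete_topology int) (x i))).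
Qed.

Lemma nbhs_int_boxP (x : nat -> int) (U : set ZN) : nbhs (x : ZN) U ->
  exists k, int_box x k `<=` U.
Proof.
pose G := [set U : set ZN | exists k, int_box x k `<=` U].
have FG : Filter G.
  constructor; first by exists 0%N.
    move=> A B [k1 A1] [k2 B2]; exists (maxn k1 k2) => y yx; split.
      by apply: A1 => i ik; apply: yx; apply: leq_trans ik (leq_maxl _ _).
    by apply: B2 => i ik; apply: yx; apply: leq_trans ik (leq_maxr _ _).
  by move=> A B AB [k A1]; exists k => y /A1 /AB.
have Gx : {ptws, G --> (x : nat -> discrete_topology int)}.
  apply/(@pointwise_cvgP nat (discrete_topology int) _ x FG) => t A At.
  by exists t.+1 => y yx; rewrite /= yx //; apply: nbhs_singleton At.
by move=> /Gx.
Qed.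

End PointwiseBoxes.

Section AdditiveSubgroup.
Variable G : zmodType.
Implicit Types H B : set G.

Lemma add_subgroupD H x y : is_add_subgroup H -> H x -> H y -> H (x + y).
Proof.
by move=> [H0 HB] Hx Hy; have := HB _ _ Hx (HB _ _ H0 Hy); rewrite sub0r opprK.
Qed.

Lemma add_subgroupMz H x (m : int) : is_add_subgroup H -> H x -> H (x *~ m).
Proof.
move=> Hs Hx; have [H0 HB] := Hs.
have Hn n : H (x *+ n).
  by elim: n => [|n IH]; rewrite ?mulr0n // mulrS; apply: add_subgroupD.
case: m => n; first exact: Hn.
by rewrite NegzE mulrNz; have := HB _ _ H0 (Hn n.+1); rewrite sub0r.
Qed.

Lemma gen_add_subgroupP B : is_add_subgroup (gen_add_subgroup B).
Proof.
split; first by move=> H [[]].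
by move=> x y Bx By H HB; have [[_ HBH] _] := HB; exact: HBH (Bx H HB) (By H HB).
Qed.

Lemma sub_gen_add_subgroup B : B `<=` gen_add_subgroup B.
Proof. by move=> x Bx H [_ BH]; apply: BH. Qed.

End AdditiveSubgroup.

Section SmallSpan.
Variables (R : realType) (E : topologicalLmodType R).

Lemma add_subgroup_lincomb_int (H : set E) (m : nat -> int) b N :
  is_add_subgroup H -> (forall i, (i < N)%N -> H (b i)) ->
  H (lincomb (fun i => (m i)%:~R) b N).
Proof.
move=> Hs; elim: N => [|N IH] Hb; first by rewrite /lincomb big_ord0; case: Hs.
rewrite /lincomb big_ord_recr /= scaler_int; apply: add_subgroupD => //.
  by apply: IH => i iN; apply/Hb/ltnW.
by apply: add_subgroupMz => //; apply: Hb.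
Qed.

Lemma nbhs0_lincomb_small_coef (a : nat -> E) k U : nbhs (0 : E) U ->
  exists2 d : R, 0 < d & forall N c, (forall i, (i < k)%N -> `|c i| < d) ->
    (forall i, (k <= i)%N -> c i = 0) -> U (lincomb c a N).
Proof.
elim: k U => [|k IH] U U0.
  exists 1 => // N c _ c0; rewrite lincomb0 => [|i _]; last exact: c0.
  exact: nbhs_singleton U0.
have [V [V0 VU]] := nbhs0_add_split U0.
have [d1 d10 d1V] := IH V V0.
have [d2 d20 d2V] := nbhs0_scale_small (a k) V0.
exists (Num.min d1 d2) => [|N c cd ck]; first by rewrite lt_min d10.
have [cd2 cd1] : `|c k| < d2 /\ forall i, (i < k)%N -> `|c i| < d1.
  split; last by move=> i ik; have := cd i (ltnW ik); rewrite lt_min => /andP [].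
  by have := cd k (ltnSn k); rewrite lt_min => /andP [].
rewrite (lincomb_split k); apply: VU.
  by apply: d1V => i ik; [rewrite ik; apply: cd1|rewrite ltnNge ik].
have [kN|Nk] := ltnP k N; last first.
  rewrite lincomb0 => [|i iN]; last by rewrite (leq_trans iN Nk).
  by rewrite -(scale0r (a k)); apply: d2V; rewrite normr0.
rewrite (@lincomb_stable _ _ _ _ k.+1) //; last first.
  by move=> i ki; rewrite ltnNge (ltnW ki) /= ck.
rewrite /lincomb big_ord_recr /= ltnn big1 ?add0r; first exact: d2V cd2.
by move=> i _; rewrite ltn_ord scale0r.
Qed.

(* Scaling by [1/M] maps the integer span of [A `\` F], which lies in a
   balanced set, onto the combinations with coefficients in [Z/M]; the
   remaining coefficients are smaller than [1/M]. *)
Lemma acs_span_small (A : set E) : abs_cauchy_summable A ->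
  forall U, nbhs (0 : E) U -> exists F, [/\ finite_set F, F `<=` A &
    forall N c b, (forall i, (i < N)%N -> (A `\` F) (b i)) -> U (lincomb c b N)].
Proof.
move=> acs U U0; have [V [V0 VU]] := nbhs0_add_split U0.
have [F [Ff FA FV]] := acs _ (nbhs0_balanced_core V0).
exists F; split => // N c b Fb.
have [d d0 dV] := nbhs0_lincomb_small_coef b N V0.
pose M := (Num.truncn d^-1).+1.
have M0 : (0 : R) < M%:R by rewrite ltr0n.
have Md : M%:R^-1 < d.
  by rewrite -[d]invrK ltf_pV2 ?posrE ?invr_gt0 // truncnS_gt.
pose m i := Num.floor (M%:R * c i).
pose r i := if (i < N)%N then c i - M%:R^-1 * (m i)%:~R else 0.
have -> : lincomb c b N = M%:R^-1 *: lincomb (fun i => (m i)%:~R) b N + lincomb r b N.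
  rewrite -lincombZ -lincombD; apply: eq_lincomb => i iN.
  by rewrite /r iN addrC subrK.
apply: VU.
  apply: balanced_core_sub; apply: balanced_coreP; last first.
    by rewrite normfV ger0_norm ?ler0n // invf_le1 // ler1n.
  apply: FV; apply: add_subgroup_lincomb_int; first exact: gen_add_subgroupP.
  by move=> i iN; apply: sub_gen_add_subgroup; apply: Fb.
apply: dV => i iN; last by rewrite /r ltnNge iN.
rewrite /r iN.
have fl := floor_le (M%:R * c i); have fg := floorD1_gt (M%:R * c i).
rewrite -/(m i) intrD in fl fg.
have -> : c i - M%:R^-1 * (m i)%:~R = M%:R^-1 * (M%:R * c i - (m i)%:~R).
  by rewrite mulrBr mulrA mulVf ?mul1r // gt_eqF.
rewrite normrM ger0_norm ?invr_ge0 ?ler0n // ger0_norm ?subr_ge0 //.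
apply: le_lt_trans Md; rewrite ler_piMr ?invr_ge0 ?ler0n //; lra.
Qed.

End SmallSpan.

Section IsolatedSequence.
Variables (R : realType) (E : topologicalLmodType R).

Definition tail_small (a : nat -> E) := forall U, nbhs (0 : E) U ->
  exists k, forall N c, (forall i, (i < k)%N -> c i = 0) -> U (lincomb c a N).

Definition isolated_by (a : nat -> E) (W : nat -> set E) := forall j,
  [/\ nbhs (0 : E) (W j), balanced (W j),
      (forall x y, W j x -> W j y -> a j != x + y) &
      forall N c, (forall i, (i <= j)%N -> c i = 0) -> W j (lincomb c a N)].

End IsolatedSequence.

Section PointSelection.
Variables (R : realType) (E : topologicalLmodType R).
Hypothesis hE : hausdorff_space E.
Variable A : set E.
Hypotheses (infA : infinite_set A) (acsA : abs_cauchy_summable A).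

Definition fresh_step (B : set E) (t : E * set E * set E) :=
  let: (a, W, F) := t in
  [/\ A a /\ ~ B a, nbhs (0 : E) W /\ balanced W,
      (forall x y, W x -> W y -> a != x + y),
      finite_set F /\ F `<=` A &
      forall N c b, (forall i, (i < N)%N -> (A `\` F) (b i)) -> W (lincomb c b N)].

Lemma fresh_step_exists B : finite_set B -> exists t, fresh_step B t.
Proof.
move=> fB; have : infinite_set (A `\` (B `|` [set 0])).
  by apply: infinite_setD => //; rewrite finite_setU; split => //; apply: finite_set1.
move=> /infinite_setN0 [a [Aa /not_orP [Ba /eqP a0]]].
have [U [U0 Ua]] := hausdorff_nbhs0_notin hE a0.
have [V [V0 VU]] := nbhs0_add_split U0.
have [F [Ff FA FV]] := acs_span_small acsA (nbhs0_balanced_core V0).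
exists (a, balanced_core V, F); split => //.
- by split; [exact: nbhs0_balanced_core|exact: balanced_coreP].
- move=> x y Vx Vy; apply/eqP => ax; apply: Ua; rewrite ax.
  by apply: VU; apply: balanced_core_sub.
Qed.

Lemma fresh_step_total B : exists t, finite_set B -> fresh_step B t.
Proof.
have [fB|nfB] := pselect (finite_set B); last by exists (0, setT, set0).
by have [t Bt] := fresh_step_exists fB; exists t.
Qed.

Definition next_step B := projT1 (cid (fresh_step_total B)).

Lemma next_stepP B : finite_set B -> fresh_step B (next_step B).
Proof. by rewrite /next_step; case: cid. Qed.

(* Later points avoid the earlier points and the earlier sets [F], so each
   [W_n] absorbs every combination of later points. *)
Fixpoint used n : set E :=
  if n is m.+1 then used m `|` (next_step (used m)).2 `|` [set (next_step (used m)).1.1]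
  else set0.

Definition point n := (next_step (used n)).1.1.
Definition isol n := (next_step (used n)).1.2.
Definition excluded n := (next_step (used n)).2.

Lemma used_finite n : finite_set (used n).
Proof.
elim: n => [|n IH] /=; first exact: finite_set0.
have := next_stepP IH; case: (next_step (used n)) => [[a W] F] /= [_ _ _ [Ff _] _].
by rewrite !finite_setU; split; [split|] => //; apply: finite_set1.
Qed.

Lemma pointP n : fresh_step (used n) (point n, isol n, excluded n).
Proof.
rewrite /point /isol /excluded; have := next_stepP (used_finite n).
by case: (next_step (used n)) => [[a W] F].
Qed.

Lemma used_mono n m : (n <= m)%N -> used n `<=` used m.
Proof.
elim: m => [|m IH]; first by rewrite leqn0 => /eqP ->.
rewrite leq_eqVlt => /orP [/eqP -> //|]; rewrite ltnS => nm x /(IH nm) ?.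
by left; left.
Qed.

Lemma used_later n m : (n < m)%N -> used m (point n) /\ excluded n `<=` used m.
Proof.
move=> /used_mono nm; split; first by apply: nm; right.
by move=> x Fx; apply: nm; left; right.
Qed.

Lemma point_fresh n : ~ used n (point n).
Proof. by have [[_ ?] _ _ _ _] := pointP n. Qed.

Lemma pointA n : A (point n).
Proof. by have [[? _] _ _ _ _] := pointP n. Qed.

Lemma point_inj : injective point.
Proof.
have lt_neq n m : (n < m)%N -> point n != point m.
  by move=> /used_later [nm _]; apply/eqP => e; apply: (@point_fresh m); rewrite -e.
by move=> n m e; case: (ltngtP n m) => [/lt_neq|/lt_neq|//]; rewrite e eqxx.
Qed.

Lemma point_tail_small : tail_small point.
Proof.
move=> U U0; have [F [Ff FA FU]] := acs_span_small acsA U0.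
have [s Fs] := (finite_seqP F).1 Ff.
have [k ks] := injective_eventually_notin point_inj s.
exists k => N c ck; rewrite (lincomb_shift_index _ _ ck); apply: FU => i _.
by split; [exact: pointA|rewrite Fs /=; apply/negP/ks/leq_maxr].
Qed.

Lemma point_isolated : isolated_by point isol.
Proof.
move=> j; have [_ [W0 Wb] Wa _ FW] := pointP j; split => // N c cj.
have cj' i : (i < j.+1)%N -> c i = 0 by rewrite ltnS; apply: cj.
rewrite (lincomb_shift_index _ _ cj'); apply: FW => i _; split; first exact: pointA.
by move=> /(used_later (leq_maxr i j.+1)).2; apply: point_fresh.
Qed.

End PointSelection.

Lemma acs_isolated_sequence (R : realType) (E : topologicalLmodType R) (A : set E) :
  hausdorff_space E -> infinite_set A -> abs_cauchy_summable A ->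
  exists (a : nat -> E) (W : nat -> set E), tail_small a /\ isolated_by a W.
Proof.
move=> hE infA acsA.
by exists (point hE infA acsA), (isol hE infA acsA); split;
  [exact: point_tail_small|exact: point_isolated].
Qed.

Section Expansion.
Variables (R : realType) (E : topologicalLmodType R).
Variables (a : nat -> E) (W : nat -> set E).
Hypotheses (a_tail : tail_small a) (aW : isolated_by a W).

Definition expansion (t : nat -> R) (e : E) := forall V, nbhs (0 : E) V ->
  forall k, exists M, (k <= M)%N /\ V (e - lincomb t a M).

Lemma expansionZ (c : R) t e : expansion t e -> expansion (fun i => c * t i) (c *: e).
Proof.
move=> te V V0 k; have [M [kM eM]] := te _ (nbhs0_scale c V0) k.
by exists M; split => //; rewrite lincombZ -scalerBr.
Qed.

Lemma expansion_small U : nbhs (0 : E) U -> exists k (d : R), 0 < d /\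
  forall t e, expansion t e -> (forall i, (i < k)%N -> `|t i| < d) -> U e.
Proof.
move=> U0; have [V1 [V10 V1U]] := nbhs0_add_split U0.
have [V2 [V20 V2V1]] := nbhs0_add_split V10.
have [k ak] := a_tail V20.
have [d d0 dV2] := nbhs0_lincomb_small_coef a k V20.
exists k, d; split => // t e te td.
have [M [kM eM]] := te _ V10 k.
rewrite -(subrK (lincomb t a M) e); apply: V1U => //.
rewrite (lincomb_split k); apply: V2V1; last by apply: ak => i ->.
by apply: dV2 => i ik; [rewrite ik; apply: td|rewrite ltnNge ik].
Qed.

Definition coef_bound (V : set E) k (eps : R) := forall t e, expansion t e -> V e ->
  forall i, (i < k)%N -> `|t i| < eps.

(* If [|t_j| >= 1] then, writing the partial sum as [h + t_j a_j + s] with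
   [h] small and [s] in [W_j], the point [a_j] would lie in [W_j + W_j]. *)
Lemma coef_bound_step j :
  (forall eps, 0 < eps -> exists2 V, nbhs (0 : E) V & coef_bound V j eps) ->
  exists2 V, nbhs (0 : E) V & forall t e, expansion t e -> V e -> `|t j| < 1.
Proof.
move=> IH; have [W0 Wb Wa Wt] := aW j.
have [N1 [N10 N1W]] := nbhs0_add_split W0.
have [N2 [N20 N2N1]] := nbhs0_add_split N10.
pose N := balanced_core (N1 `&` N2).
have N0 : nbhs (0 : E) N by apply/nbhs0_balanced_core/filterI.
have NW x y z : N x -> N y -> N z -> W j (x + y + z).
  move=> /balanced_core_sub [_ Nx] /balanced_core_sub [_ Ny] /balanced_core_sub [Nz _].
  by apply: N1W => //; apply: N2N1.
have [eta eta0 etaN] := nbhs0_lincomb_small_coef a j N0.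
have [V0 V00 V0eta] := IH eta eta0.
exists (V0 `&` N); first exact: filterI.
move=> t e te [V0e Ne]; rewrite ltNge; apply/negP => tj1.
have tj0 : t j != 0 by apply: contraTneq tj1 => ->; rewrite normr0 ler10.
have [M [jM eM]] := te _ N0 j.+1.
pose h := lincomb (fun i => if (i < j)%N then t i else 0) a M.
pose s := lincomb (fun i => if (i <= j)%N then 0 else t i) a M.
have Nh : N h.
  by apply: etaN => i ij; [rewrite ij; exact: V0eta te V0e i ij|rewrite ltnNge ij].
have Ws : W j s by apply: Wt => i ->.
have sum_split : lincomb t a M = h + t j *: a j + s.
  rewrite -(lincomb_delta (t j) a jM) -!lincombD; apply: eq_lincomb => i _.
  by case: (ltngtP i j) => [||->]; rewrite ?addr0 ?add0r.
have Wjs : W j (t j *: a j + s).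
  have -> : t j *: a j + s = e + - (e - lincomb t a M) + - h.
    by rewrite opprB [e + _]addrC subrK sum_split -[h + _ + s]addrA [_ - h]addrC addKr.
  by apply: NW => //; apply: balanced_coreN.
have tjV : `|(t j)^-1| <= 1 by rewrite normfV invf_le1 // normr_gt0.
have tjNV : `|- (t j)^-1| <= 1 by rewrite normrN.
have := Wa _ _ (Wb _ _ Wjs tjV) (Wb _ _ Ws tjNV).
by rewrite scalerDr scalerA mulVf // scale1r scaleNr addrK eqxx.
Qed.

Lemma nbhs0_coef_bound k (eps : R) : 0 < eps ->
  exists2 V, nbhs (0 : E) V & coef_bound V k eps.
Proof.
elim: k eps => [|j IH] eps eps0; first by exists setT => //; exact: filterT.
have [V1 V10 V1j] := coef_bound_step IH.
have [V2 V20 V2eps] := IH eps eps0.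
exists (V2 `&` [set x | V1 (eps^-1 *: x)]); first exact/filterI/nbhs0_scale.
move=> t e te [V2e V1e] i; rewrite ltnS leq_eqVlt => /orP [/eqP ->|ij].
  have := V1j _ _ (expansionZ eps^-1 te) V1e.
  by rewrite normrM normfV (gtr0_norm eps0) ltr_pdivrMl // mulr1.
exact: V2eps te V2e i ij.
Qed.

Lemma expansion_embedding (T : RN R -> E) (D : set (RN R)) :
  (forall x y, D x -> D y -> D (fun i => y i - x i)) ->
  (forall c x y, D x -> D y -> T (fun i => c * x i + y i) = c *: T x + T y) ->
  (forall x, D x -> expansion x (T x)) -> embedding_on D T.
Proof.
move=> DB TL DT.
have TB x y : D x -> D y -> T (fun i => y i - x i) = T y - T x.
  move=> Dx Dy; rewrite -(scaleN1r (T x)) addrC -TL //.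
  by congr T; apply: funext => i; rewrite mulN1r addrC.
split.
- move=> x y; rewrite !in_setE => Dx Dy Txy.
  have e0 : expansion (fun i => x i - y i) 0.
    by rewrite -(subrr (T x)) {2}Txy -TB //; apply/DT/DB.
  apply: funext => i; apply/eqP; rewrite -subr_eq0 -normr_le0.
  apply/ler_addgt0Pr => eps eps0; rewrite add0r.
  have [V V0 Veps] := nbhs0_coef_bound i.+1 eps0.
  exact/ltW/(Veps _ _ e0 (nbhs_singleton V0) i (ltnSn i)).
- move=> x Dx V VTx; have [k [d [d0 kd]]] := expansion_small (nbhs0_shift VTx).
  exists (real_box x k d); split; first exact: nbhs_real_box.
  move=> y Dy xy; have := kd _ _ (DT _ (DB _ _ Dx Dy)) xy.
  by rewrite /= TB // addrC subrK.
- move=> x Dx U Ux; have [k [d [d0 kdU]]] := nbhs_real_boxP Ux.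
  have [V V0 Vd] := nbhs0_coef_bound k d0.
  exists [set z | V (z - T x)]; split; first exact: nbhs_subr.
  move=> y Dy /= Vy; apply: kdU => i ik.
  by apply: (Vd _ _ (DT _ (DB _ _ Dx Dy))) => //; rewrite TB.
Qed.

Definition sums_to (x : nat -> R) (e : E) := (fun n => lincomb x a n) @ \oo --> e.

Lemma sums_to_expansion x e : sums_to x e -> expansion x e.
Proof.
move=> xe V V0 k; have [k0 _ k0V] := xe _ (nbhs_subl e V0).
by exists (maxn k k0); split; [exact: leq_maxl|apply: k0V; exact: leq_maxr].
Qed.

Lemma sums_toD (c : R) x y ex ey : sums_to x ex -> sums_to y ey ->
  sums_to (fun i => c * x i + y i) (c *: ex + ey).
Proof.
move=> xe ye U U0; have [V [V0 VU]] := nbhs0_add_split (nbhs0_shift U0).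
have [kx _ kxV] := xe _ (nbhs_subr ex (nbhs0_scale c V0)).
have [ky _ kyV] := ye _ (nbhs_subr ey V0).
exists (maxn kx ky) => // n kxyn.
have Vx := kxV n (leq_trans (leq_maxl _ _) kxyn).
have Vy := kyV n (leq_trans (leq_maxr _ _) kxyn).
have := VU _ _ Vx Vy; rewrite /= lincombD lincombZ scalerBr.
by rewrite addrACA [c *: ex + _]addrC [ey + _]addrC !subrK.
Qed.

Lemma sums_to_fin_supp x : fin_supp x -> exists e, sums_to x e.
Proof.
move=> /fin_suppP [N xN]; exists (lincomb x a N); apply: cvg_near_cst.
by exists N => // n /= Nn; exact: lincomb_stable.
Qed.

Lemma sums_to_complete x : tvs_complete E -> exists e, sums_to x e.
Proof.
move=> Ecomplete; apply: Ecomplete => U U0; have [k ak] := a_tail U0.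
exists [set u | exists2 n, (k <= n)%N & u = lincomb x a n].
  by exists k => // n kn; exists n.
move=> _ _ [n kn ->] [m km ->].
rewrite -(@lincomb_trunc _ _ n x a (maxn n m)) ?leq_maxl //.
rewrite -(@lincomb_trunc _ _ m x a (maxn n m)) ?leq_maxr //.
rewrite -lincombN -lincombD; apply: ak => i ik.
by rewrite (leq_trans ik kn) (leq_trans ik km) subrr.
Qed.

Definition series_sum (x : nat -> R) : E := xget 0 [set e | sums_to x e].

Lemma series_sumP x : (exists e, sums_to x e) -> sums_to x (series_sum x).
Proof. exact: xgetPex. Qed.

Hypothesis hE : hausdorff_space E.

Lemma series_sum_lin (c : R) x y : (exists e, sums_to x e) -> (exists e, sums_to y e) ->
  series_sum (fun i => c * x i + y i) = c *: series_sum x + series_sum y.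
Proof.
move=> /series_sumP xe /series_sumP ye.
apply: (@cvg_unique E hE _ (fmap_proper_filter _ eventually_filter)).
  by apply: series_sumP; exists (c *: series_sum x + series_sum y); apply: sums_toD.
exact: sums_toD.
Qed.

Lemma isolated_contains_RfinN : contains_RfinN E.
Proof.
have fin_sums x : fin_supp (x : nat -> R) -> sums_to x (series_sum x).
  by move=> /sums_to_fin_supp /series_sumP.
exists series_sum; split=> [c x y fx fy|].
  by apply: series_sum_lin; exact: sums_to_fin_supp.
apply: expansion_embedding => [x y|c x y fx fy|x fx]; first exact: fin_suppB.
  by apply: series_sum_lin; exact: sums_to_fin_supp.
exact/sums_to_expansion/fin_sums.
Qed.

Lemma isolated_contains_RN : tvs_complete E -> contains_RN E.
Proof.
move=> Ecomplete; have sums x : exists e, sums_to x e := sums_to_complete x Ecomplete.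
exists series_sum; split=> [c x y|]; first exact: series_sum_lin.
apply: expansion_embedding => [//|c x y _ _|x _]; first exact: series_sum_lin.
exact/sums_to_expansion/series_sumP.
Qed.

End Expansion.

Section Restriction.
Variables (R : realType) (E : topologicalLmodType R).

Lemma contains_RN_RfinN : contains_RN E -> contains_RfinN E.
Proof.
move=> [f [f_lin [f_inj f_cont f_open]]].
exists f; split=> [c x y _ _|]; first exact: f_lin.
split=> [x y _ _|x _ V /(f_cont x I) [U [Ux UV]]|x _ U /(f_open x I) [V [Vfx VU]]].
- by apply: f_inj; rewrite in_setE.
- by exists U; split => // y _; apply: UV.
- by exists V; split => // y _; apply: VU.
Qed.

Lemma intr_dist_lt1 (m n : int) : `|(m%:~R : R) - n%:~R| < 1 -> m = n.
Proof. by rewrite -intrB -intr_norm ltrz1 -[1]add0r ltzD1 normr_le0 subr_eq0 => /eqP. Qed.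

Lemma contains_RfinN_ZfinN : contains_RfinN E -> contains_ZfinN E.
Proof.
move=> [f [f_lin [f_inj f_cont f_open]]].
pose iota (z : ZN) : RN R := fun i => (z i)%:~R.
have fin_iota z : fin_supp (z : nat -> int) -> fin_supp (iota z : nat -> R).
  exact: fin_supp_intr.
exists (fun z => f (iota z)); split=> [x y fx fy|].
  rewrite -[f (iota x)]scale1r -f_lin; try exact: fin_iota.
  by congr f; apply: funext => i; rewrite /iota mul1r intrD.
split.
- move=> x y; rewrite !in_setE => fx fy /f_inj; rewrite !in_setE.
  move=> /(_ (fin_iota _ fx) (fin_iota _ fy)) xy; apply: funext => i.
  by apply: (@intr_inj R); have := congr1 (fun h : RN R => h i) xy.
- move=> x fx V /(f_cont _ (fin_iota _ fx)) [U [Ux UV]].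
  have [k [d [d0 kdU]]] := nbhs_real_boxP Ux.
  exists (int_box x k); split => [|y fy xy]; first exact: nbhs_int_box.
  apply: UV; first exact: fin_iota.
  by apply: kdU => i ik; rewrite /iota xy // subrr normr0.
- move=> x fx U /nbhs_int_boxP [k kU].
  have [V [Vfx VU]] := f_open _ (fin_iota _ fx) _ (nbhs_real_box (iota x) k ltr01).
  exists V; split => // y fy Vy; apply: kU => i ik; apply: (@intr_dist_lt1).
  exact: VU (fin_iota _ fy) Vy i ik.
Qed.

End Restriction.

Definition unit_seq (n : nat) : ZN := fun i => ((i == n) : nat)%:Z.

Lemma fin_supp_unit_seq n : fin_supp (unit_seq n : nat -> int).
Proof.
by apply/fin_suppP; exists n.+1 => i; rewrite /unit_seq; case: eqP => // ->; rewrite ltnn.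
Qed.

Section UnitImages.
Variables (R : realType) (E : topologicalLmodType R) (g : ZN -> E).
Hypothesis gD : forall x y : ZN, fin_supp (x : nat -> int) -> fin_supp (y : nat -> int) ->
  g (fun i => (x i : int) + (y i : int)) = g x + g y.
Hypothesis g_emb : embedding_on (fun x : ZN => fin_supp (x : nat -> int)) g.

Let zero : ZN := fun=> 0.

Lemma fin_supp_zero : fin_supp (zero : nat -> int).
Proof. by apply/fin_suppP; exists 0%N. Qed.

Lemma additive_on_zero : g zero = 0.
Proof.
have := gD fin_supp_zero fin_supp_zero.
have -> : (fun i => (zero i : int) + (zero i : int)) = zero.
  by apply: funext => i; rewrite addr0.
by move=> e; apply: (@addrI _ (g zero)); rewrite addr0 -e.
Qed.

Lemma additive_onB (x y : ZN) : fin_supp (x : nat -> int) -> fin_supp (y : nat -> int) ->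
  g (fun i => y i - x i) = g y - g x.
Proof.
move=> fx fy; have fyx := fin_suppB fx fy.
apply/eqP; rewrite eq_sym subr_eq -gD //; apply/eqP; congr g.
by apply: funext => i; rewrite subrK.
Qed.

Let vanishing_below k :=
  [set y : ZN | fin_supp (y : nat -> int) /\ forall i, (i < k)%N -> y i = 0].

Lemma image_vanishing_subgroup k : is_add_subgroup (g @` vanishing_below k).
Proof.
split; first by exists zero; [split; [exact: fin_supp_zero|]|exact: additive_on_zero].
move=> _ _ [y1 [f1 k1] <-] [y2 [f2 k2] <-]; exists (fun i => y1 i - y2 i).
  by split => [|i ik]; [exact: fin_suppB|rewrite k1 ?k2 // subrr].
exact: additive_onB.
Qed.

(* Beyond index [k], the images of the unit vectors generate a subgroup of the
   image of the sequences vanishing below [k], which lies in [U] for large [k]. *)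
Lemma unit_images_acs : abs_cauchy_summable (range (fun n => g (unit_seq n))).
Proof.
move=> U U0; have [_ g_cont _] := g_emb.
have Ug0 : nbhs (g zero) U by rewrite additive_on_zero.
have [V [V0 VU]] := g_cont zero fin_supp_zero U Ug0.
have [k kV] := nbhs_int_boxP V0.
exists ((fun n => g (unit_seq n)) @` `I_k); split.
- exact/finite_image/finite_II.
- by move=> _ [n _ <-]; exists n.
apply: subset_trans (_ : g @` vanishing_below k `<=` U).
  move=> v gv; apply: gv; split; first exact: image_vanishing_subgroup.
  move=> _ [[n _ <-] nk]; exists (unit_seq n) => //; split => [|i ik].
    exact: fin_supp_unit_seq.
  rewrite /unit_seq; case: eqP => // ei; exfalso; apply: nk; exists n => //.
  by rewrite /= -ei.
by move=> _ [y [fy yk] <-]; apply: VU => //; apply: kV => i ik; rewrite yk.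
Qed.

Lemma unit_images_infinite : infinite_set (range (fun n => g (unit_seq n))).
Proof.
apply: injective_infinite_range => n m /= gnm; have [g_inj _ _] := g_emb.
move: gnm => /g_inj; rewrite !in_setE => /(_ (fin_supp_unit_seq n) (fin_supp_unit_seq m)).
by move=> /(congr1 (fun h : ZN => h n)); rewrite /unit_seq eqxx; case: eqP.
Qed.

End UnitImages.

Theorem theorem11p1 (R : realType) (E : topologicalLmodType R) :
  hausdorff_space E ->
  [/\ contains_RfinN E <-> contains_ZfinN E,
      contains_ZfinN E <-> has_inf_acs_subset E
    & tvs_complete E -> (has_inf_acs_subset E <-> contains_RN E)].
Proof.
move=> hE.
have ZfinN_acs : contains_ZfinN E -> has_inf_acs_subset E.
  move=> [g [gD g_emb]]; exists (range (fun n => g (unit_seq n))).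
  by split; [exact: unit_images_infinite g_emb|exact: unit_images_acs gD g_emb].
have [acs_RfinN acs_RN] : (has_inf_acs_subset E -> contains_RfinN E) /\
    (tvs_complete E -> has_inf_acs_subset E -> contains_RN E).
  split=> [|Ecomplete] [A [infA acsA]];
    have [a [W [a_tail aW]]] := acs_isolated_sequence hE infA acsA.
  - exact: isolated_contains_RfinN a_tail aW hE.
  - exact: isolated_contains_RN a_tail aW hE Ecomplete.
split.
- split; first exact: contains_RfinN_ZfinN.
  by move=> /ZfinN_acs /acs_RfinN.
- by split=> [|/acs_RfinN /contains_RfinN_ZfinN].
- move=> Ecomplete; split; first exact: acs_RN.
  by move=> /contains_RN_RfinN /contains_RfinN_ZfinN /ZfinN_acs.
Qed.
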